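(* Let $C\subseteq\mathbb{F}_q^{2n}$ be a symplectic self-orthogonal $\mathbb F_q$-linear code with stabilizer code $Q(C)$, and let $\emptyset\neq I\subsetneq J\subseteq\{1,\dots,n\}$. If $|J|\geq n-\mathrm{swt}(C^{\perp_s})+|I|+1$, then $Q(C)$ is $(I,J)$-locally recoverable.
   Context: $q$ is a power of a prime $p$. Vectors of $\mathbb{F}_q^{2n}$ are written $(\mathbf a|\mathbf b)$, coordinate pair $(a_j,b_j)$ indexed by $j\in\{1,\dots,n\}$. Symplectic form $(\mathbf a|\mathbf b)\cdot_s(\mathbf c|\mathbf d)=\mathbf a\cdot\mathbf d-\mathbf b\cdot\mathbf c$; $C^{\perp_s}$ its dual; $C$ symplectic self-orthogonal if $C\subseteq C^{\perp_s}$. The symplectic weight of $(\mathbf a|\mathbf b)$ is $\#\{j:(a_j,b_j)\ne(0,0)\}$, and $\mathrm{swt}(D)$ is the minimum symplectic weight of a nonzero vector of $D$. Quantum setting: $\xi=e^{2\pi\iota/p}$; $X(a)|x\rangle=|x+a\rangle$, $Z(b)|x\rangle=\xi^{\mathrm{tr}_{q/p}(bx)}|x\rangle$ on $\mathbb C^q$; $E_{(\mathbf a,\mathbf b)}=\bigotimes_jX(a_j)Z(b_j)$. $Q(C)\subseteq\mathbb C^{q^n}$ is the common eigenspace $\{v:Ev=\lambda(E)v\ \forall E\in S\}$, $S$ the commutative group generated by scalars $\xi^\ell\mathcal I$ and $E_{\mathbf y}$, $\mathbf y\in C$, $\lambda$ a character with $\lambda(\xi\mathcal I)=\xi$. Let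 $\Gamma(\rho)=q^{-2}\sum_{a,b}X(a)Z(b)\rho(X(a)Z(b))^\dagger$, and $\Gamma^I$ apply $\Gamma$ to the qudits indexed by $I$, identity elsewhere. $Q$ is $(I,J)$-locally recoverable if there is a trace-preserving quantum operation $\mathcal R$ acting only on the qudits indexed by $J$ with $\mathcal R\circ\Gamma^I(|\varphi\rangle\langle\varphi|)=|\varphi\rangle\langle\varphi|$ for all $|\varphi\rangle\in Q$. *)

From HB Require Import structures.
From mathcomp Require Import all_boot all_order all_algebra algC.
Set Implicit Arguments. Unset Strict Implicit. Unset Printing Implicit Defensive.
Import Order.TTheory GRing.Theory Num.Theory.
Local Open Scope ring_scope.

Definition apart (F : finFieldType) (n : nat) (v : 'rV[F]_(n + n)) (j : 'I_n) : F :=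
  v 0 (lshift n j).
Definition bpart (F : finFieldType) (n : nat) (v : 'rV[F]_(n + n)) (j : 'I_n) : F :=
  v 0 (rshift n j).

Definition sform (F : finFieldType) (n : nat) (u v : 'rV[F]_(n + n)) : F :=
  \sum_(j < n) (apart u j * bpart v j - bpart u j * apart v j).

Definition sdual (F : finFieldType) (n : nat) (C : {vspace 'rV[F]_(n + n)}) :
  {set 'rV[F]_(n + n)} :=
  [set w | [forall v, (v \in C) ==> (sform v w == 0)]].

Definition symp_self_orth (F : finFieldType) (n : nat) (C : {vspace 'rV[F]_(n + n)}) :=
  {subset C <= sdual C}.

Definition swtv (F : finFieldType) (n : nat) (v : 'rV[F]_(n + n)) : nat :=
  #|[set j : 'I_n | (apart v j != 0) || (bpart v j != 0)]|.

(* minimum symplectic weight of a nonzero vector of D (default n if D = {0}) *)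
Definition swt (F : finFieldType) (n : nat) (D : {set 'rV[F]_(n + n)}) : nat :=
  \big[minn/n]_(v in D | v != 0) swtv v.

(* computational basis of C^{q^n}: configurations x in F^n *)
Definition config (F : finFieldType) (n : nat) := {ffun 'I_n -> F}.

(* operators on C^{q^n}, indexed through enum_rank of configurations *)
Definition op (F : finFieldType) (n : nat) := 'M[algC]_(#|config F n|).
Definition ket (F : finFieldType) (n : nat) := 'cV[algC]_(#|config F n|).

Definition ent (F : finFieldType) (n : nat) (M : op F n) (x y : config F n) : algC :=
  M (enum_rank x) (enum_rank y).

Definition mkop (F : finFieldType) (n : nat) (f : config F n -> config F n -> algC) :
  op F n := \matrix_(i, j) f (enum_val i) (enum_val j).

Definition adj (m k : nat) (A : 'M[algC]_(m, k)) : 'M[algC]_(k, m) :=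
  (map_mx (fun z => z^*) A)^T.

(* xi = e^{2 pi i / p}: p.-root (-1) is the p-th root of -1 with minimal
   non-negative argument, i.e. e^{i pi / p}; its square is e^{2 i pi / p}. *)
Definition xi (p : nat) : algC := (p.-root (-1)) ^+ 2.

Definition ftrace (F : finFieldType) (p : nat) (x : F) : F :=
  \sum_(i < logn p #|F|) x ^+ (p ^ i).

(* the element of the prime field F_p, as a natural number in [0, p) *)
Definition prime_field_nat (F : finFieldType) (p : nat) (y : F) : nat :=
  find (fun i : nat => i%:R == y) (iota 0 p).

Definition xi_tr (F : finFieldType) (p : nat) (z : F) : algC :=
  xi p ^+ prime_field_nat p (ftrace p z).

(* E_{(a,b)} = (x)_j X(a_j) Z(b_j), with X(a)Z(b)|x> = xi^{tr(bx)} |x+a>;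
   entry <y| E |x>. *)
Definition Eop (F : finFieldType) (p n : nat) (a b : 'I_n -> F) : op F n :=
  mkop (fun y x => \prod_(j < n)
          ((y j == x j + a j)%:R * xi_tr p (b j * x j))).

Definition Evec (F : finFieldType) (p n : nat) (v : 'rV[F]_(n + n)) : op F n :=
  Eop p (apart v) (bpart v).

Inductive genS (F : finFieldType) (p n : nat) (C : {vspace 'rV[F]_(n + n)}) :
  op F n -> Prop :=
| genS_scalar (l : nat) : genS p C ((xi p ^+ l)%:M)
| genS_E (y : 'rV[F]_(n + n)) : y \in C -> genS p C (Evec p y)
| genS_mul (A B : op F n) : genS p C A -> genS p C B -> genS p C (A *m B).

Definition stab_char (F : finFieldType) (p n : nat) (C : {vspace 'rV[F]_(n + n)})
  (lam : op F n -> algC) : Prop :=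
  (forall A B, genS p C A -> genS p C B -> lam (A *m B) = lam A * lam B)
  /\ lam ((xi p)%:M) = xi p.

Definition inQ (F : finFieldType) (p n : nat) (C : {vspace 'rV[F]_(n + n)})
  (lam : op F n -> algC) (v : ket F n) : Prop :=
  forall E, genS p C E -> E *m v = lam E *: v.

Definition unit_at (F : finFieldType) (n : nat) (i : 'I_n) (a : F) : 'I_n -> F :=
  fun j => if j == i then a else 0.

Definition gamma_at (F : finFieldType) (p n : nat) (i : 'I_n) (rho : op F n) : op F n :=
  ((#|F| ^ 2)%:R)^-1 *:
    \sum_(a : F) \sum_(b : F)
       (Eop p (unit_at i a) (unit_at i b) *m rho *m adj (Eop p (unit_at i a) (unit_at i b))).

Definition gammaI (F : finFieldType) (p n : nat) (I : {set 'I_n}) (rho : op F n) : op F n :=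
  foldr (@gamma_at F p n) rho (enum I).

Definition proj (F : finFieldType) (n : nat) (J : {set 'I_n}) (x : config F n) :
  config F n := [ffun i => if i \in J then x i else 0].

(* K acts only on the qudits of J: K = A (x) Id_{J^c} *)
Definition acts_only_on (F : finFieldType) (n : nat) (J : {set 'I_n}) (K : op F n) : Prop :=
  exists a : config F n -> config F n -> algC,
    forall x y, ent K x y = a (proj J x) (proj J y) * (proj (~: J) x == proj (~: J) y)%:R.

Definition tp_op_on (F : finFieldType) (n : nat) (J : {set 'I_n}) (Ks : seq (op F n)) : Prop :=
  (forall K, K \in Ks -> acts_only_on J K) /\
  \sum_(K <- Ks) (adj K *m K) = 1%:M.

Definition apply_op (F : finFieldType) (n : nat) (Ks : seq (op F n)) (rho : op F n) : op F n :=
  \sum_(K <- Ks) (K *m rho *m adj K).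

Definition locally_recoverable (F : finFieldType) (p n : nat) (C : {vspace 'rV[F]_(n + n)})
  (lam : op F n -> algC) (I J : {set 'I_n}) : Prop :=
  exists Ks : seq (op F n), tp_op_on J Ks /\
    forall v : ket F n, inQ p C lam v ->
      apply_op Ks (gammaI p I (v *m adj v)) = v *m adj v.

(* Write chi = xi^tr for the additive character of F_q and C_J for the codewords of C
   supported on J. For |phi> in Q(C) and an error E_e supported on I, the state
   E_e |phi> is a joint eigenvector of the E_c, c in C_J, with eigenvalues
   lam(E_c) chi(<e, c>). The weight bound makes every nonzero vector of the symplectic
   dual heavier than |I \cup J^c|, so C restricts onto all vectors supported on
   I \cup J^c; hence any two distinct errors supported on I are told apart by some
   c in C_J. Character orthogonality then turns the syndrome projectors P_e, averages
   of the E_c over C_J, into orthogonal projectors with P_e' E_e |phi> = [e' = e] E_e |phi>.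
   Measuring the syndrome and undoing E_e only touches J, and Gamma^I is a convex
   combination of conjugations by such E_e. *)

From HB Require Import structures.
From mathcomp Require Import all_boot all_order all_algebra all_field algC ring zify.
From Stdlib Require Import Classical.
Set Implicit Arguments. Unset Strict Implicit. Unset Printing Implicit Defensive.
Import Order.TTheory GRing.Theory Num.Theory.
Local Open Scope ring_scope.

(** * The additive character of F_q *)

Section RootOfUnity.
Variable p : nat.
Hypothesis pr_p : prime p.

Lemma xi_neq1 : xi p != 1.
Proof.
have p_gt0 := prime_gt0 pr_p.
rewrite /xi sqrf_eq1; apply/norP; split; apply/eqP => r1.
- have := rootCK p_gt0 (-1 : algC); rewrite r1 expr1n => /eqP.
  by rewrite -subr_eq0 opprK -(natrD _ 1 1) pnatr_eq0.
- by have := rootC_lt0 (-1 : algC) (prime_gt1 pr_p); rewrite r1 ltrN10.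
Qed.

Lemma xi_prim_root : p.-primitive_root (xi p).
Proof.
have xi_p : xi p ^+ p = 1.
  by rewrite /xi -exprM mulnC exprM rootCK ?prime_gt0 // sqrrN expr1n.
have [m prim_m m_dvd] := prim_order_exists (prime_gt0 pr_p) xi_p.
case/primeP: pr_p => _ /(_ m m_dvd) /pred2P [m1|mp]; last by rewrite -mp in prim_m *.
have := prim_expr_order prim_m; rewrite m1 expr1 => xi1.
by move: xi_neq1; rewrite xi1 eqxx.
Qed.

Lemma norm_xi : `|xi p| = 1.
Proof. by rewrite /xi normrX norm_rootC normrN1 rootC1 ?prime_gt0 // expr1n. Qed.

End RootOfUnity.

Section AdditiveCharacter.
Variables (F : finFieldType) (p : nat).
Hypotheses (pr_p : prime p) (chF : p \in [pchar F]).
Local Notation k := (logn p #|F|).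

Lemma logn_card_gt0 : (0 < k)%N.
Proof.
have cardF : #|F| = (p ^ k)%N := card_pprimeChar chF.
case: k cardF => // /[!expn0] cardF.
by have := finNzRing_gt1 F; rewrite cardF.
Qed.

Lemma ftraceD (x y : F) : ftrace p (x + y) = ftrace p x + ftrace p y.
Proof.
rewrite /ftrace -big_split; apply: eq_bigr => i _; apply: exprDn_pchar.
by rewrite pnatX (eq_pnat _ (pcharf_eq chF)) pnat_id.
Qed.

Lemma ftrace0 : ftrace p (0 : F) = 0.
Proof. by rewrite /ftrace big1 // => i _; rewrite expr0n eqn0Ngt expn_gt0 prime_gt0. Qed.

Lemma ftrace_frobenius (x : F) : ftrace p x ^+ p = ftrace p x.
Proof.
rewrite -(pFrobenius_autE chF) /ftrace rmorph_sum /=.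
under eq_bigr => i _ do rewrite pFrobenius_autE -exprM -expnSr.
have xq : x ^+ (p ^ k) = x by rewrite -(card_pprimeChar chF) expf_card.
move: xq; case: k logn_card_gt0 => // k' _ xq.
rewrite big_ord_recr big_ord_recl /= xq expn0 expr1 addrC.
by congr (_ + _); apply: eq_bigr => i _.
Qed.

Lemma natr_eq_pchar i j : (i%:R == j%:R :> F) = (i == j %[mod p]).
Proof.
wlog le_ji : i j / (j <= i)%N => [wlog_le|].
  by case: (leqP j i) => [|/ltnW] /wlog_le //; rewrite eq_sym [(_ == _ %[mod p])]eq_sym.
by rewrite eqn_mod_dvd // (dvdn_pcharf chF) natrB // subr_eq0.
Qed.

Lemma frobenius_fixed_natr (y : F) : y ^+ p = y -> exists m, y = m%:R.
Proof.
move=> yp; have [|y_out] := boolP (y \in [seq i%:R | i <- iota 0 p]).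
  by case/mapP => i _ ->; exists i.
pose P : {poly F} := 'X^p - 'X.
have szP : size P = p.+1.
  by rewrite size_polyDl ?size_polyXn // size_polyN size_polyX ltnS prime_gt1.
have P_neq0 : P != 0 by rewrite -size_poly_eq0 szP.
have uniq_nat : uniq [seq i%:R : F | i <- iota 0 p].
  rewrite map_inj_in_uniq ?iota_uniq // => i j.
  rewrite !mem_iota !add0n => /andP [_ ip] /andP [_ jp] /eqP.
  by rewrite natr_eq_pchar !modn_small // => /eqP.
suff : (size (y :: [seq i%:R | i <- iota 0 p]) < size P)%N.
  by rewrite /= size_map size_iota szP ltnn.
apply: max_poly_roots => //=; last by rewrite y_out uniq_nat.
rewrite /root /P !hornerE yp subrr eqxx /=; apply/allP => _ /mapP [i _ ->].
by rewrite /root !hornerE -(pFrobenius_autE chF) pFrobenius_aut_nat subrr.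
Qed.

Lemma prime_field_natE m : prime_field_nat p (m%:R : F) = (m %% p)%N.
Proof.
have mp : (m %% p < p)%N by rewrite ltn_mod prime_gt0.
rewrite /prime_field_nat (@eq_in_find _ _ (pred1 (m %% p)%N)); last first.
  move=> i; rewrite mem_iota add0n => /andP [_ ip] /=.
  by rewrite natr_eq_pchar modn_small // eq_sym.
have := @index_uniq _ 0%N (m %% p) (iota 0 p).
by rewrite size_iota iota_uniq nth_iota // add0n; apply.
Qed.

Lemma ftrace_natr (x : F) : exists m, ftrace p x = m%:R.
Proof. exact/frobenius_fixed_natr/ftrace_frobenius. Qed.

Lemma xi_trE (x : F) m : ftrace p x = m%:R -> xi_tr p x = xi p ^+ m.
Proof.
by move=> tx; rewrite /xi_tr tx prime_field_natE (prim_expr_mod (xi_prim_root pr_p)).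
Qed.

Lemma xi_trD (x y : F) : xi_tr p (x + y) = xi_tr p x * xi_tr p y.
Proof.
have [m tx] := ftrace_natr x; have [m' ty] := ftrace_natr y.
by rewrite (xi_trE tx) (xi_trE ty) (@xi_trE _ (m + m')) ?exprD // ftraceD tx ty natrD.
Qed.

Lemma xi_tr0 : xi_tr p (0 : F) = 1.
Proof. by rewrite (@xi_trE _ 0) ?ftrace0. Qed.

Lemma xi_tr_sum (I : Type) (r : seq I) (P : pred I) (f : I -> F) :
  xi_tr p (\sum_(i <- r | P i) f i) = \prod_(i <- r | P i) xi_tr p (f i).
Proof. exact: (big_morph _ xi_trD xi_tr0). Qed.

Lemma xi_tr_conjK (x : F) : (xi_tr p x)^* * xi_tr p x = 1.
Proof. by rewrite -normCKC /xi_tr normrX norm_xi // !expr1n. Qed.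

Lemma xi_tr_neq0 (x : F) : xi_tr p x != 0.
Proof. by apply: contra_eq_neq (xi_tr_conjK x) => ->; rewrite mulr0 eq_sym oner_neq0. Qed.

Lemma xi_trN (x : F) : xi_tr p (- x) = (xi_tr p x)^*.
Proof. by apply: (mulIf (xi_tr_neq0 x)); rewrite xi_tr_conjK -xi_trD addNr xi_tr0. Qed.

Lemma ftrace_neq0 : exists x : F, ftrace p x != 0.
Proof.
apply/existsP; rewrite -negb_forall; apply/forallP => trace0.
pose T : {poly F} := \sum_(i < k) 'X^(p ^ i).
have k1k : (k.-1 < k)%N by rewrite ltn_predL logn_card_gt0.
have T_neq0 : T != 0.
  apply/eqP => /(congr1 (fun P : {poly F} => P`_(p ^ k.-1))).
  rewrite coef0 /T coef_sum (bigD1 (Ordinal k1k)) //= coefXn eqxx big1 ?addr0.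
    by move/eqP; rewrite oner_eq0.
  move=> i /eqP ne; rewrite coefXn eqn_exp2l ?prime_gt1 //.
  by case: eqP => // i_eq; case: ne; apply: val_inj.
have szT : (size T <= (p ^ k.-1).+1)%N.
  apply: leq_trans (size_sum _ _ _) _; apply/bigmax_leqP => i _.
  by rewrite size_polyXn ltnS leq_exp2l ?prime_gt1 // -ltnS prednK ?logn_card_gt0.
suff /(max_poly_roots T_neq0)/(_ (enum_uniq F)) : all (root T) (enum F).
  rewrite -cardE (card_pprimeChar chF) => /leq_trans/(_ szT).
  by rewrite ltnS leqNgt ltn_exp2l ?prime_gt1 // ltn_predL logn_card_gt0.
apply/allP => x _; rewrite /root /T horner_sum; apply/eqP.
by rewrite -[RHS](eqP (trace0 x)); apply: eq_bigr => i _; rewrite hornerXn.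
Qed.

Lemma xi_tr_nontrivial : exists u : F, xi_tr p u != 1.
Proof.
have [x tx] := ftrace_neq0; have [m txm] := ftrace_natr x; exists x.
by rewrite (xi_trE txm) -(prim_order_dvd (xi_prim_root pr_p)) (dvdn_pcharf chF) -txm.
Qed.

End AdditiveCharacter.

(** * The symplectic space F_q^(2n) *)

Section SymplecticSpace.
Variables (F : finFieldType) (n : nat).
Local Notation vec := 'rV[F]_(n + n).
Implicit Types (S A : {set 'I_n}) (u v w c e t : vec).

Lemma apartD u v j : apart (u + v) j = apart u j + apart v j.
Proof. by rewrite /apart mxE. Qed.
Lemma bpartD u v j : bpart (u + v) j = bpart u j + bpart v j.
Proof. by rewrite /bpart mxE. Qed.
Lemma apartZ a v j : apart (a *: v) j = a * apart v j.
Proof. by rewrite /apart mxE. Qed.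
Lemma bpartZ a v j : bpart (a *: v) j = a * bpart v j.
Proof. by rewrite /bpart mxE. Qed.
Lemma apart0 j : apart (0 : vec) j = 0.
Proof. by rewrite /apart mxE. Qed.
Lemma bpart0 j : bpart (0 : vec) j = 0.
Proof. by rewrite /bpart mxE. Qed.

Lemma vecP u v :
  (forall j, apart u j = apart v j) -> (forall j, bpart u j = bpart v j) -> u = v.
Proof.
move=> ha hb; apply/rowP => k; rewrite -(splitK k).
by case: (split k) => j /=; [exact: ha | exact: hb].
Qed.

Lemma sformDl u v w : sform (u + v) w = sform u w + sform v w.
Proof. by rewrite /sform -big_split /=; apply: eq_bigr => j _; rewrite !apartD !bpartD; ring. Qed.
Lemma sformZl a v w : sform (a *: v) w = a * sform v w.
Proof. by rewrite /sform mulr_sumr; apply: eq_bigr => j _; rewrite apartZ bpartZ; ring. Qed.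
Lemma sform0l w : sform 0 w = 0.
Proof. by rewrite -(scale0r 0) sformZl mul0r. Qed.
Lemma sformNl v w : sform (- v) w = - sform v w.
Proof. by rewrite -scaleN1r sformZl mulN1r. Qed.
Lemma sform_suml (I : Type) (r : seq I) (P : pred I) (G : I -> vec) w :
  sform (\sum_(i <- r | P i) G i) w = \sum_(i <- r | P i) sform (G i) w.
Proof. exact: (big_morph _ (fun u v => sformDl u v w) (sform0l w)). Qed.
Lemma sform_anti v w : sform v w = - sform w v.
Proof. by rewrite /sform -sumrN; apply: eq_bigr => j _; ring. Qed.
Lemma sformDr u v w : sform w (u + v) = sform w u + sform w v.
Proof. by rewrite sform_anti sformDl opprD -!sform_anti. Qed.
Lemma sformZr a v w : sform w (a *: v) = a * sform w v.
Proof. by rewrite sform_anti sformZl -mulrN -sform_anti. Qed.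
Lemma sformNr v w : sform w (- v) = - sform w v.
Proof. by rewrite sform_anti sformNl opprK -sform_anti. Qed.

Definition ua (j : 'I_n) : vec := delta_mx 0 (lshift n j).
Definition ub (j : 'I_n) : vec := delta_mx 0 (rshift n j).

Lemma apart_ua i j : apart (ua j) i = (i == j)%:R.
Proof. by rewrite /apart /ua mxE eqxx eq_shift. Qed.
Lemma bpart_ua i j : bpart (ua j) i = 0.
Proof. by rewrite /bpart /ua mxE eq_rlshift andbF. Qed.
Lemma apart_ub i j : apart (ub j) i = 0.
Proof. by rewrite /apart /ub mxE eq_lrshift andbF. Qed.
Lemma bpart_ub i j : bpart (ub j) i = (i == j)%:R.
Proof. by rewrite /bpart /ub mxE eqxx eq_shift. Qed.

Lemma sform_ua_l j w : sform (ua j) w = bpart w j.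
Proof.
rewrite /sform (bigD1 j) //= big1 => [|i /negbTE ij].
  by rewrite apart_ua bpart_ua eqxx /=; ring.
by rewrite apart_ua bpart_ua ij /=; ring.
Qed.
Lemma sform_ub_l j w : sform (ub j) w = - apart w j.
Proof.
rewrite /sform (bigD1 j) //= big1 => [|i /negbTE ij].
  by rewrite apart_ub bpart_ub eqxx /=; ring.
by rewrite apart_ub bpart_ub ij /=; ring.
Qed.

Definition supp_in S v :=
  [forall j, (j \notin S) ==> (apart v j == 0) && (bpart v j == 0)].

Lemma supp_inP S v :
  reflect (forall j, j \notin S -> apart v j = 0 /\ bpart v j = 0) (supp_in S v).
Proof.
apply: (iffP forallP) => [sv j jS | sv j]; last first.
  by apply/implyP => /sv [-> ->]; rewrite eqxx.
by have /implyP/(_ jS)/andP [/eqP -> /eqP ->] := sv j.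
Qed.

Lemma supp_in0 S : supp_in S 0.
Proof. by apply/supp_inP => j _; rewrite apart0 bpart0. Qed.
Lemma supp_inD S u v : supp_in S u -> supp_in S v -> supp_in S (u + v).
Proof.
move=> /supp_inP su /supp_inP sv; apply/supp_inP => j jS.
by have [[au bu] [av bv]] := (su j jS, sv j jS); rewrite apartD bpartD au bu av bv addr0.
Qed.
Lemma supp_inZ S a v : supp_in S v -> supp_in S (a *: v).
Proof.
move=> /supp_inP sv; apply/supp_inP => j /sv [av bv].
by rewrite apartZ bpartZ av bv mulr0.
Qed.
Lemma supp_inN S v : supp_in S v -> supp_in S (- v).
Proof. by rewrite -scaleN1r; apply: supp_inZ. Qed.
Lemma supp_inS S S' v : S \subset S' -> supp_in S v -> supp_in S' v.
Proof.
move=> sSS' /supp_inP sv; apply/supp_inP => j jS'.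
by apply: sv; apply: contra jS'; apply: (subsetP sSS').
Qed.

Lemma swtv_supp_in S v : supp_in S v -> (swtv v <= #|S|)%N.
Proof.
move=> /supp_inP sv; apply/subset_leq_card/subsetP => j; rewrite inE.
by apply: contraLR => /sv [-> ->]; rewrite eqxx.
Qed.

Lemma sform_supp_disjoint S S' u w :
  [disjoint S & S'] -> supp_in S u -> supp_in S' w -> sform u w = 0.
Proof.
move=> dS /supp_inP su /supp_inP sw; rewrite /sform big1 // => j _.
have [jS|jS] := boolP (j \in S).
  by have [-> ->] := sw j (negbT (disjointFr dS jS)); rewrite !mulr0 subr0.
by have [-> ->] := su j jS; rewrite !mul0r subr0.
Qed.

Lemma sform_ua_r j w : sform w (ua j) = - bpart w j.
Proof. by rewrite sform_anti sform_ua_l. Qed.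
Lemma sform_ub_r j w : sform w (ub j) = apart w j.
Proof. by rewrite sform_anti sform_ub_l opprK. Qed.

Lemma supp_in_ua S j : j \in S -> supp_in S (ua j).
Proof.
move=> jS; apply/supp_inP => i iS; rewrite apart_ua bpart_ua.
by case: eqP iS => [->|]; rewrite ?jS.
Qed.
Lemma supp_in_ub S j : j \in S -> supp_in S (ub j).
Proof.
move=> jS; apply/supp_inP => i iS; rewrite apart_ub bpart_ub.
by case: eqP iS => [->|]; rewrite ?jS.
Qed.

Lemma exists_coord_neq0 v : v != 0 -> exists j, (apart v j != 0) || (bpart v j != 0).
Proof.
move=> v_neq0; apply/existsP; apply: contraR v_neq0 => /existsPn v0.
apply/eqP/vecP => j; have /norP [/negbNE/eqP a0 /negbNE/eqP b0] := v0 j;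
by rewrite ?apart0 ?bpart0.
Qed.

Definition supp_mask S : 'rV[F]_(n + n) :=
  \row_k (match split k with inl j => (j \in S)%:R | inr j => (j \in S)%:R end).

Definition restr S : 'Hom(vec, vec) := linfun (mulmxr (diag_mx (supp_mask S))).

Lemma apart_restr S v j : apart (restr S v) j = if j \in S then apart v j else 0.
Proof.
rewrite /restr lfunE /= /apart mul_mx_diag !mxE.
rewrite -[lshift n j]/(unsplit (inl _ j)) unsplitK.
by case: (j \in S); rewrite ?mulr1 ?mulr0.
Qed.
Lemma bpart_restr S v j : bpart (restr S v) j = if j \in S then bpart v j else 0.
Proof.
rewrite /restr lfunE /= /bpart mul_mx_diag !mxE.
rewrite -[rshift n j]/(unsplit (inr _ j)) unsplitK.
by case: (j \in S); rewrite ?mulr1 ?mulr0.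
Qed.

Lemma supp_in_restr S v : supp_in S (restr S v).
Proof. by apply/supp_inP => j /negbTE jS; rewrite apart_restr bpart_restr jS. Qed.

Lemma restr_id S v : supp_in S v -> restr S v = v.
Proof.
move=> /supp_inP sv; apply: vecP => j; rewrite ?apart_restr ?bpart_restr;
by case: ifPn => // /sv [a0 b0]; rewrite ?a0 ?b0.
Qed.

Lemma restr_split S v : v = restr S v + restr (~: S) v.
Proof.
apply: vecP => j; rewrite ?apartD ?bpartD ?apart_restr ?bpart_restr inE;
by case: (j \in S); rewrite ?addr0 ?add0r.
Qed.

Lemma restrC S v : restr S (restr (~: S) v) = 0.
Proof.
apply: vecP => j; rewrite ?apart_restr ?bpart_restr ?apart0 ?bpart0 inE;
by case: (j \in S).
Qed.

Lemma sform_restr S e c : supp_in S e -> sform e (restr S c) = sform e c.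
Proof.
move=> se; rewrite [in RHS](restr_split S c) sformDr.
rewrite (@sform_supp_disjoint S (~: S) e (restr (~: S) c)) ?supp_in_restr ?addr0 //.
by rewrite -setI_eq0 setICr.
Qed.

Lemma supp_in_orth S w :
  (forall u, supp_in S u -> sform u w = 0) -> supp_in (~: S) w.
Proof.
move=> orth; apply/supp_inP => j; rewrite inE negbK => jS; split.
  by apply/eqP; rewrite -oppr_eq0 -sform_ub_l orth ?supp_in_ub.
by rewrite -sform_ua_l orth ?supp_in_ua.
Qed.

Lemma exists_sform_orth (T : {vspace vec}) : (\dim T < n + n)%N ->
  exists2 w : vec, w != 0 & forall x, x \in T -> sform x w = 0.
Proof.
move=> dimT; pose B := vbasis T.
pose M : 'M[F]_(n + n, \dim T) := \matrix_(k, i)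
  (match split k with inl j => - bpart B`_i j | inr j => apart B`_i j end).
have mulM (w : vec) i : (w *m M) 0 i = sform B`_i w.
  rewrite mxE big_split_ord /= /sform -big_split /=; apply: eq_bigr => j _.
  rewrite !mxE -[lshift n j]/(unsplit (inl _ j)) -[rshift n j]/(unsplit (inr _ j)).
  by rewrite !unsplitK /apart /bpart; ring.
have : kermx M != 0.
  by rewrite -mxrank_eq0 mxrank_ker -lt0n subn_gt0 (leq_ltn_trans (rank_leq_col M)).
case/rowV0Pn => w /sub_kermxP wM w_neq0; exists w => // x xT.
rewrite (coord_vbasis xT) sform_suml big1 // => l _.
by rewrite sformZl -mulM wM mxE mulr0.
Qed.

Lemma restr_code_onto (C : {vspace vec}) A :
  (forall w, w \in sdual C -> w != 0 -> (#|A| < swtv w)%N) ->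
  forall t, supp_in A t -> exists2 c, c \in C & restr A c = t.
Proof.
move=> dual_wt t tA; set T := (restr A @: C + restr (~: A) @: fullv)%VS.
suff /eqP T_full : T == fullv.
  have : t \in T by rewrite T_full memvf.
  case/memv_addP => _ /memv_imgP [c cC ->] [_ /memv_imgP [z _ ->] tE].
  exists c => //; rewrite -(restr_id tA) tE linearD /= restrC addr0.
  by rewrite (restr_id (supp_in_restr A c)).
rewrite eqEdim subvf dimvf /dim /= mul1n leqNgt; apply/negP => /exists_sform_orth [w w_neq0 w_orth].
have restrA_T c : c \in C -> restr A c \in T.
  by move=> cC; rewrite -[restr A c]addr0 memv_add ?memv_img ?mem0v.
have restrC_T u : supp_in (~: A) u -> u \in T.
  by move=> uA; rewrite -[u]add0r -(restr_id uA) memv_add ?memv_img ?memvf ?mem0v.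
have wA : supp_in A w.
  by rewrite -[A]setCK; apply: supp_in_orth => u /restrC_T /w_orth.
have w_dual : w \in sdual C.
  rewrite inE; apply/forallP => c; apply/implyP => cC.
  by rewrite (restr_split A c) sformDl !w_orth ?restrA_T ?restrC_T ?supp_in_restr ?addr0.
by have := dual_wt w w_dual w_neq0; rewrite ltnNge swtv_supp_in.
Qed.

Lemma subcode_detects (C : {vspace vec}) (I J : {set 'I_n}) e :
  I \subset J ->
  (forall w, w \in sdual C -> w != 0 -> (#|I :|: ~: J| < swtv w)%N) ->
  supp_in I e -> e != 0 -> exists2 c, (c \in C) && supp_in J c & sform e c != 0.
Proof.
move=> IJ dual_wt eI /exists_coord_neq0 [j ej].
have jI : j \in I.
  by apply: contraLR ej => /(supp_inP _ _ eI) [-> ->]; rewrite eqxx.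
pose t := if bpart e j != 0 then ua j else ub j.
have t_supp S : j \in S -> supp_in S t.
  by rewrite /t; case: ifP => _ jS; [apply: supp_in_ua | apply: supp_in_ub].
have et : sform e t != 0.
  rewrite /t; case: ifPn => bj; first by rewrite sform_ua_r oppr_eq0.
  by rewrite sform_ub_r; move: ej; rewrite (negbTE bj) orbF.
have [c cC tc] := restr_code_onto dual_wt (t_supp _ (subsetP (subsetUl I (~: J)) j jI)).
exists c; last by rewrite -(sform_restr _ (supp_inS (subsetUl I (~: J)) eI)) tc.
rewrite cC (restr_split (I :|: ~: J) c) tc supp_inD ?t_supp ?(subsetP IJ) //.
by apply: supp_inS (supp_in_restr _ _); rewrite setCU setCK subIset // subxx orbT.
Qed.

End SymplecticSpace.

Arguments ua {F n} j.
Arguments ub {F n} j.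

Section MinimumWeight.
Variables (F : finFieldType) (n : nat) (D : {set 'rV[F]_(n + n)}).

Lemma swt_le_swtv w : w \in D -> w != 0 -> (swt D <= swtv w)%N.
Proof.
move=> wD w_neq0; rewrite /swt -big_filter.
have : w \in [seq x <- index_enum _ | (x \in D) && (x != 0)].
  by rewrite mem_filter wD w_neq0 mem_index_enum.
elim: (filter _ _) => //= x s IH; rewrite big_cons inE => /orP [/eqP <-|/IH ws].
  exact: geq_minl.
exact: leq_trans (geq_minr _ _) ws.
Qed.

Lemma swt_le_n : (swt D <= n)%N.
Proof.
apply: (big_ind (fun m => m <= n)%N) => // [x y xn _|v _].
  exact: leq_trans (geq_minl _ _) xn.
by apply: leq_trans (max_card _) _; rewrite card_ord.
Qed.

Lemma swtv_gt_of_swt (I J : {set 'I_n}) :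
  (n - swt D + #|I| + 1 <= #|J|)%N ->
  forall w, w \in D -> w != 0 -> (#|I :|: ~: J| < swtv w)%N.
Proof.
move=> wtJ w wD w_neq0; have := swt_le_swtv wD w_neq0; have := swt_le_n.
have : (#|I :|: ~: J| <= #|I| + #|~: J|)%N by rewrite cardsU leq_subr.
have : (#|J| + #|~: J| = n)%N by rewrite cardsC card_ord.
lia.
Qed.

End MinimumWeight.

(** * Operators and Weyl operators *)

Section Adjoint.
Variables m k l : nat.
Implicit Types A B : 'M[algC]_(m, k).

Lemma hadjM A (B : 'M[algC]_(k, l)) : adj (A *m B) = adj B *m adj A.
Proof. by rewrite /adj map_mxM trmx_mul. Qed.
Lemma hadjD A B : adj (A + B) = adj A + adj B.
Proof. by rewrite /adj map_mxD linearD. Qed.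
Lemma hadjB A B : adj (A - B) = adj A - adj B.
Proof. by rewrite /adj map_mxB linearB. Qed.
Lemma hadjZ c A : adj (c *: A) = c^* *: adj A.
Proof. by rewrite /adj map_mxZ linearZ. Qed.
Lemma hadj0 : adj (0 : 'M[algC]_(m, k)) = 0.
Proof. by rewrite /adj map_mx0 trmx0. Qed.
Lemma hadjK A : adj (adj A) = A.
Proof. by apply/matrixP => i j; rewrite /adj !mxE conjCK. Qed.
Lemma hadj_sum (I : Type) (r : seq I) (P : pred I) (G : I -> 'M[algC]_(m, k)) :
  adj (\sum_(i <- r | P i) G i) = \sum_(i <- r | P i) adj (G i).
Proof. exact: (big_morph _ hadjD hadj0). Qed.

End Adjoint.

Lemma hadj1 m : adj (1%:M : 'M[algC]_m) = 1%:M.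
Proof. by rewrite /adj map_mx1 trmx1. Qed.

Lemma hadj_mul_self_eq0 N (v : 'cV[algC]_N) : ((adj v *m v) 0 0 == 0) = (v == 0).
Proof.
apply/idP/eqP => [|->]; last by rewrite mulmx0 mxE.
rewrite mxE psumr_eq0 => [|i _]; last by rewrite /adj !mxE mulrC mul_conjC_ge0.
move=> /allP v0; apply/matrixP => i j; rewrite (ord1 j) mxE.
by have := v0 i (mem_index_enum _); rewrite /= /adj !mxE mulrC mul_conjC_eq0 => /eqP.
Qed.

Section Entries.
Variables (F : finFieldType) (n : nat).
Local Notation cfg := (config F n).
Implicit Types A B : op F n.

Lemma ent_mkop (f : cfg -> cfg -> algC) x y : ent (mkop f) x y = f x y.
Proof. by rewrite /ent /mkop mxE !enum_rankK. Qed.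

Lemma op_ext A B : (forall x y, ent A x y = ent B x y) -> A = B.
Proof.
move=> AB; apply/matrixP => i j; have := AB (enum_val i) (enum_val j).
by rewrite /ent !enum_valK.
Qed.

Lemma entM A B x y : ent (A *m B) x y = \sum_z ent A x z * ent B z y.
Proof.
rewrite /ent mxE (reindex (@enum_rank _)) //.
by apply: onW_bij; apply: enum_rank_bij.
Qed.
Lemma entD A B x y : ent (A + B) x y = ent A x y + ent B x y.
Proof. by rewrite /ent mxE. Qed.
Lemma entB A B x y : ent (A - B) x y = ent A x y - ent B x y.
Proof. by rewrite /ent !mxE. Qed.
Lemma entZ c A x y : ent (c *: A) x y = c * ent A x y.
Proof. by rewrite /ent mxE. Qed.
Lemma ent0 x y : ent (0 : op F n) x y = 0.
Proof. by rewrite /ent mxE. Qed.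
Lemma ent1 x y : ent (1%:M : op F n) x y = (x == y)%:R.
Proof. by rewrite /ent mxE (inj_eq enum_rank_inj). Qed.
Lemma ent_adj A x y : ent (adj A) x y = (ent A y x)^*.
Proof. by rewrite /ent /adj !mxE. Qed.

End Entries.

Lemma prodr_natb (R : comNzRingType) (I : finType) (P : pred I) (g : I -> R) :
  \prod_j ((P j)%:R * g j) = [forall j, P j]%:R * \prod_j g j.
Proof.
rewrite big_split /=; congr (_ * _).
have [/forallP Pall|/forallPn [j Pj]] := boolP [forall j, P j].
  by rewrite big1 // => j _; rewrite Pall.
by rewrite (bigD1 j) //= (negbTE Pj) mul0r.
Qed.

Lemma prodr_natb1 (R : comNzRingType) (I : finType) (P : pred I) :
  \prod_j ((P j)%:R : R) = [forall j, P j]%:R.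
Proof.
have := prodr_natb P (fun _ => 1 : R); rewrite big1_eq mulr1 => <-.
by apply: eq_bigr => j _; rewrite mulr1.
Qed.

Section WeylOperators.
Variables (F : finFieldType) (p n : nat).
Hypotheses (pr_p : prime p) (chF : p \in [pchar F]).
Local Notation cfg := (config F n).
Local Notation vec := 'rV[F]_(n + n).
Local Notation chi := (@xi_tr F p).
Local Notation E := (@Evec F p n).
Implicit Types (a b : 'I_n -> F) (c e : vec).

Lemma EopE a b y x :
  ent (Eop p a b) y x = (y == [ffun j => x j + a j])%:R * \prod_j chi (b j * x j).
Proof.
rewrite ent_mkop prodr_natb; congr ((nat_of_bool _)%:R * _); apply/forallP/eqP => [yx|->].
  by apply/ffunP => j; rewrite ffunE; apply/eqP.
by move=> j; rewrite ffunE.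
Qed.

Lemma eq_Eop a b a' b' : a =1 a' -> b =1 b' -> Eop p a b = Eop p a' b'.
Proof.
by move=> ea eb; apply: op_ext => y x; rewrite !ent_mkop; apply: eq_bigr => j _; rewrite ea eb.
Qed.

Lemma EopM a b a' b' :
  Eop p a b *m Eop p a' b' =
  (\prod_j chi (b j * a' j)) *: Eop p (fun j => a j + a' j) (fun j => b j + b' j).
Proof.
apply: op_ext => y x; rewrite entM entZ (bigD1 [ffun j => x j + a' j]) //=.
rewrite big1 => [|z /negbTE zx]; last by rewrite (EopE a') zx mul0r mulr0.
rewrite addr0 !EopE eqxx mul1r.
have -> : [ffun j => [ffun i => x i + a' i] j + a j] = [ffun j => x j + (a j + a' j)].
  by apply/ffunP => j; rewrite !ffunE addrAC addrA.
rewrite mulrCA -mulrA; congr (_ * _).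
rewrite -!big_split /=; apply: eq_bigr => j _; rewrite ffunE.
by rewrite mulrDr mulrDl !(xi_trD pr_p chF); ring.
Qed.

Lemma Eop0 : Eop p (fun _ : 'I_n => 0 : F) (fun _ => 0) = 1%:M.
Proof.
apply: op_ext => y x; rewrite EopE ent1 big1 ?mulr1 => [|j _]; last first.
  by rewrite mul0r (xi_tr0 pr_p chF).
by congr (_ == _)%:R; apply/ffunP => j; rewrite ffunE addr0.
Qed.

Lemma Eop_unitary_l a b : adj (Eop p a b) *m Eop p a b = 1%:M.
Proof.
apply: op_ext => y x; rewrite entM ent1 (bigD1 [ffun j => y j + a j]) //=.
rewrite big1 => [|z /negbTE zy]; last by rewrite ent_adj EopE zy mul0r conjC0 mul0r.
rewrite addr0 ent_adj !EopE eqxx mul1r.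
have -> : ([ffun j => y j + a j] == [ffun j => x j + a j]) = (y == x).
  apply/eqP/eqP => [yx|->] //; apply/ffunP => j.
  by have := congr1 (fun f : cfg => f j) yx; rewrite !ffunE => /addIr.
have [->|_] := eqVneq y x; last by rewrite mul0r mulr0.
rewrite mul1r rmorph_prod -big_split /= big1 // => j _.
exact: xi_tr_conjK.
Qed.

Lemma Eop_unitary_r a b : Eop p a b *m adj (Eop p a b) = 1%:M.
Proof. exact/mulmx1C/Eop_unitary_l. Qed.

Definition omega c c' : algC := \prod_j chi (bpart c j * apart c' j).

Lemma omegaK c c' : (omega c c')^* * omega c c' = 1.
Proof.
by rewrite /omega rmorph_prod -big_split big1 // => j _ /=; apply: xi_tr_conjK.
Qed.

Lemma EvecM c c' : E c *m E c' = omega c c' *: E (c + c').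
Proof. by rewrite /Evec EopM; congr (_ *: _); apply: eq_Eop => j; rewrite ?apartD ?bpartD. Qed.

Lemma Evec0 : E 0 = 1%:M.
Proof. by rewrite /Evec -Eop0; apply: eq_Eop => j; rewrite ?apart0 ?bpart0. Qed.

Lemma Evec_unitary_l c : adj (E c) *m E c = 1%:M.
Proof. exact: Eop_unitary_l. Qed.
Lemma Evec_unitary_r c : E c *m adj (E c) = 1%:M.
Proof. exact: Eop_unitary_r. Qed.

Lemma Evec_comm c e : E c *m E e = chi (sform e c) *: (E e *m E c).
Proof.
rewrite !EvecM scalerA [e + c]addrC; congr (_ *: _).
rewrite /omega /sform (xi_tr_sum pr_p chF) -big_split /=; apply: eq_bigr => j _.
by rewrite -(xi_trD pr_p chF); congr chi; ring.
Qed.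

Lemma hadjEvec c : adj (E c) = (omega c (- c))^* *: E (- c).
Proof.
have : adj (E c) *m (E c *m E (- c)) = E (- c) by rewrite mulmxA Evec_unitary_l mul1mx.
by rewrite EvecM subrr Evec0 -scalemxAr mulmx1 => <-; rewrite scalerA omegaK scale1r.
Qed.

End WeylOperators.

(** * Operators acting only on J *)

Section LocalOperators.
Variables (F : finFieldType) (n : nat) (J : {set 'I_n}).
Local Notation cfg := (config F n).
Local Notation PJ := (proj J).
Local Notation PC := (proj (~: J)).
Implicit Types (A B : op F n) (x y z : cfg).

(* Entrywise form of A = A_J (x) Id_(J^c). *)
Definition local_op A := forall x y, ent A x y = (PC x == PC y)%:R * ent A (PJ x) (PJ y).

Lemma local_op_acts_only_on A : local_op A -> acts_only_on J A.
Proof. by move=> lA; exists (ent A) => x y; rewrite lA mulrC. Qed.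

Lemma projK S x : proj S (proj S x) = proj S x.
Proof. by apply/ffunP => j; rewrite /proj !ffunE; case: (j \in S). Qed.
Lemma projCJ x : PC (PJ x) = 0.
Proof. by apply/ffunP => j; rewrite /proj !ffunE inE; case: (j \in J). Qed.
Lemma projJC x : PJ (PC x) = 0.
Proof. by apply/ffunP => j; rewrite /proj !ffunE inE; case: (j \in J). Qed.
Lemma projD S x y : proj S (x + y) = proj S x + proj S y.
Proof. by apply/ffunP => j; rewrite /proj !ffunE; case: ifP; rewrite ?addr0. Qed.

Lemma eq_proj x y : (x == y) = (PJ x == PJ y) && (PC x == PC y).
Proof.
apply/eqP/andP => [->//|[/eqP xyJ /eqP xyC]]; apply/ffunP => j.
have := congr1 (fun f : cfg => f j) xyJ; have := congr1 (fun f : cfg => f j) xyC.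
by rewrite !ffunE inE; case: (j \in J).
Qed.

Lemma local_op1 : local_op 1%:M.
Proof.
move=> x y; rewrite !ent1 eq_proj andbC.
by case: (PC x == PC y); rewrite ?mul1r ?mul0r ?projK.
Qed.

Lemma local_opD A B : local_op A -> local_op B -> local_op (A + B).
Proof. by move=> lA lB x y; rewrite !entD lA lB mulrDr. Qed.
Lemma local_opB A B : local_op A -> local_op B -> local_op (A - B).
Proof. by move=> lA lB x y; rewrite !entB lA lB mulrBr. Qed.
Lemma local_opZ c A : local_op A -> local_op (c *: A).
Proof. by move=> lA x y; rewrite !entZ lA mulrCA. Qed.
Lemma local_op_sum (I : Type) (r : seq I) (P : pred I) (G : I -> op F n) :
  (forall i, P i -> local_op (G i)) -> local_op (\sum_(i <- r | P i) G i).
Proof.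
move=> lG; apply: (big_ind local_op) => //; last exact: local_opD.
by move=> x y; rewrite !ent0 mulr0.
Qed.
Lemma local_op_adj A : local_op A -> local_op (adj A).
Proof. by move=> lA x y; rewrite !ent_adj lA rmorphM rmorph_nat eq_sym. Qed.

Lemma local_opM A B : local_op A -> local_op B -> local_op (A *m B).
Proof.
move=> lA lB x y; rewrite !entM mulr_sumr.
under eq_bigr => z _ do rewrite lA lB.
under [RHS]eq_bigr => z _ do rewrite lA lB !projK !projCJ.
have [xyC|xyC] := eqVneq (PC x) (PC y); last first.
  rewrite [RHS]big1 => [|z _]; last by rewrite mulr0n mul0r.
  rewrite big1 // => z _; have [xzC|] := eqVneq (PC x) (PC z); last by rewrite mulr0n !mul0r.
  by rewrite -xzC (negbTE xyC) mulr0n mul0r mulr0.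
rewrite (reindex_inj (addrI (PC x))) /=; apply: eq_bigr => z _.
have shift w : (PC x + w == PC x) = (w == 0) by rewrite -subr_eq0 addrAC subrr add0r.
by rewrite !projD projJC add0r projK -xyC eq_sym !shift [0 == _]eq_sym mul1r.
Qed.

Lemma local_op_Evec p (c : 'rV[F]_(n + n)) : supp_in J c -> local_op (Evec p c).
Proof.
move=> /supp_inP cJ x y; rewrite /Evec !ent_mkop.
have -> : (PC x == PC y) = [forall j, (j \in J) || (x j == y j)].
  apply/eqP/forallP => [xyC j|xyC].
    by have := congr1 (fun f : cfg => f j) xyC; rewrite !ffunE inE; case: (j \in J) => //= ->.
  by apply/ffunP => j; rewrite !ffunE inE; have := xyC j; case: (j \in J) => //= /eqP.
rewrite -prodr_natb1 -big_split /=.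
apply: eq_bigr => j _; rewrite !ffunE; have [jJ|jJ] := boolP (j \in J); first by rewrite mul1r.
by have [-> ->] := cJ j jJ; rewrite !addr0 !mul0r eqxx mul1r.
Qed.

End LocalOperators.

(** * Syndrome projectors *)

Section Subcode.
Variables (F : finFieldType) (n : nat) (C : {vspace 'rV[F]_(n + n)}) (J : {set 'I_n}).
Local Notation vec := 'rV[F]_(n + n).

Definition subcode : {set vec} := [set c | (c \in C) && supp_in J c].
Local Notation CJ := subcode.

Lemma subcode_sub c : c \in CJ -> c \in C.
Proof. by rewrite inE => /andP []. Qed.
Lemma subcode_supp c : c \in CJ -> supp_in J c.
Proof. by rewrite inE => /andP []. Qed.
Lemma subcode0 : 0 \in CJ.
Proof. by rewrite inE mem0v supp_in0. Qed.
Lemma subcodeD c c' : c \in CJ -> c' \in CJ -> c + c' \in CJ.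
Proof. by rewrite !inE => /andP [cC cJ] /andP [c'C c'J]; rewrite memvD // supp_inD. Qed.
Lemma subcodeZ a c : c \in CJ -> a *: c \in CJ.
Proof. by rewrite !inE => /andP [cC cJ]; rewrite memvZ // supp_inZ. Qed.
Lemma subcodeN c : c \in CJ -> - c \in CJ.
Proof. by rewrite -scaleN1r; apply: subcodeZ. Qed.
Lemma subcodeDr c c' : c \in CJ -> (c + c' \in CJ) = (c' \in CJ).
Proof.
move=> cCJ; apply/idP/idP => [cc'|]; last exact: subcodeD.
by rewrite -(addKr c c') subcodeD // subcodeN.
Qed.

Lemma card_subcode_neq0 : (#|CJ|%:R : algC) != 0.
Proof. by rewrite pnatr_eq0 -lt0n; apply/card_gt0P; exists 0; apply: subcode0. Qed.

Lemma sum_subcode_shift (V : nmodType) c (g : vec -> V) : c \in CJ ->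
  \sum_(c' in CJ) g (c + c') = \sum_(c' in CJ) g c'.
Proof.
move=> cCJ; symmetry; rewrite (reindex_inj (addrI c)) /=.
by apply: eq_bigl => c'; rewrite subcodeDr.
Qed.

Lemma sum_subcode_opp (V : nmodType) (g : vec -> V) :
  \sum_(c in CJ) g (- c) = \sum_(c in CJ) g c.
Proof.
symmetry; rewrite (reindex_inj oppr_inj) /=; apply: eq_bigl => c.
by apply/idP/idP => [|/subcodeN]; [move/subcodeN; rewrite opprK|].
Qed.

End Subcode.

Lemma scalev_inj N (v : 'cV[algC]_N) a b : v != 0 -> a *: v = b *: v -> a = b.
Proof.
move=> v_neq0 /eqP; rewrite -subr_eq0 -scalerBl scalemx_eq0 (negbTE v_neq0) orbF subr_eq0.
by move/eqP.
Qed.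

Section Syndromes.
Variables (F : finFieldType) (p n : nat).
Hypotheses (pr_p : prime p) (chF : p \in [pchar F]).
Local Notation vec := 'rV[F]_(n + n).
Local Notation chi := (@xi_tr F p).
Local Notation E := (@Evec F p n).
Variables (C : {vspace vec}) (lam : op F n -> algC) (I J : {set 'I_n}).
Hypotheses (IJ : I \subset J)
  (dual_wt : forall w, w \in sdual C -> w != 0 -> (#|I :|: ~: J| < swtv w)%N).
Local Notation CJ := (subcode C J).
Local Notation N := (#|CJ|%:R : algC).

(* Translating by a codeword c1 of C_J with <e, c1> = u multiplies the sum by xi_tr u != 1. *)
Lemma sum_subcode_xi_tr e : supp_in I e -> \sum_(c in CJ) chi (sform e c) = (e == 0)%:R * N.
Proof.
move=> eI; have [->|e_neq0] := eqVneq e 0.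
  by under eq_bigr => c _ do rewrite sform0l (xi_tr0 pr_p chF); rewrite sumr_const mul1r.
have [c0 /andP [c0C c0J] ec0] := subcode_detects IJ dual_wt eI e_neq0.
have [u xi_u] := xi_tr_nontrivial pr_p chF.
pose c1 := (u / sform e c0) *: c0.
have c1CJ : c1 \in CJ by apply: subcodeZ; rewrite inE c0C.
have := sum_subcode_shift (fun c => chi (sform e c)) c1CJ.
under eq_bigr => c _ do rewrite sformDr (xi_trD pr_p chF) sformZr divfK //.
rewrite -mulr_sumr => /eqP; rewrite -subr_eq0 -{2}(mul1r (\sum_(c in CJ) _)) -mulrBl.
by rewrite mulf_eq0 subr_eq0 (negbTE xi_u) => /eqP ->; rewrite mul0r.
Qed.

Definition syndrome_phase e c := lam (E c) * chi (sform e c).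
Local Notation mu := syndrome_phase.

(* Projector onto the joint eigenspace of the E_c, c in C_J, containing E_e Q(C)
   (see Evec_eigen_syndrome). *)
Definition syndrome_proj e : op F n := N^-1 *: \sum_(c in CJ) (mu e c)^* *: E c.
Local Notation P := syndrome_proj.

Lemma local_op_syndrome_proj e : local_op J (P e).
Proof. by apply/local_opZ/local_op_sum => c /subcode_supp cJ; apply/local_opZ/local_op_Evec. Qed.

Lemma inQ_Evec v c : inQ p C lam v -> c \in C -> E c *m v = lam (E c) *: v.
Proof. by move=> vQ cC; apply: vQ; apply: genS_E. Qed.

Lemma lam_Evec_conjK v c :
  inQ p C lam v -> v != 0 -> c \in C -> (lam (E c))^* * lam (E c) = 1.
Proof.
move=> vQ v_neq0 cC.
have : adj (E c *m v) *m (E c *m v) = adj v *m v.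
  by rewrite hadjM -mulmxA (mulmxA (adj (E c))) (Evec_unitary_l pr_p) mul1mx.
rewrite inQ_Evec // hadjZ -scalemxAl -scalemxAr scalerA.
move=> /(congr1 (fun M : 'M[algC]_1 => M 0 0)).
have vv_neq0 : (adj v *m v) 0 0 != 0 by rewrite hadj_mul_self_eq0.
by rewrite mxE => vv; apply: (mulIf vv_neq0); rewrite vv mul1r.
Qed.

Lemma syndrome_phase_shift e e' c : (mu e' c)^* = (mu e c)^* * chi (sform (e - e') c).
Proof.
rewrite /mu !rmorphM sformDl sformNl (xi_trD pr_p chF) (xi_trN pr_p chF).
by rewrite -[LHS]mul1r -(xi_tr_conjK pr_p (sform e c)); ring.
Qed.

Lemma Evec_eigen_syndrome v e c : inQ p C lam v -> c \in C ->
  E c *m (E e *m v) = mu e c *: (E e *m v).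
Proof.
move=> vQ cC; rewrite mulmxA (Evec_comm pr_p chF) -scalemxAl -mulmxA (inQ_Evec vQ cC).
by rewrite -scalemxAr scalerA mulrC.
Qed.

Lemma syndrome_proj_Evec v e e' : inQ p C lam v -> supp_in I e -> supp_in I e' ->
  P e' *m (E e *m v) = (e' == e)%:R *: (E e *m v).
Proof.
move=> vQ eI e'I; have [->|v_neq0] := eqVneq v 0; first by rewrite !mulmx0 scaler0.
have phase c : c \in CJ -> (mu e' c)^* * mu e c = chi (sform (e - e') c).
  move=> /subcode_sub cC; rewrite (syndrome_phase_shift e) mulrAC /mu rmorphM mulrACA.
  by rewrite (lam_Evec_conjK vQ v_neq0 cC) (xi_tr_conjK pr_p) !mul1r.
rewrite /P -scalemxAl mulmx_suml.
under eq_bigr => c cCJ do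
  rewrite -scalemxAl Evec_eigen_syndrome ?(subcode_sub cCJ) // scalerA phase //.
rewrite -scaler_suml sum_subcode_xi_tr ?supp_inD ?supp_inN // subr_eq0.
by rewrite scalerA mulrCA mulVf ?card_subcode_neq0 // mulr1 eq_sym.
Qed.

Section NontrivialCode.
Variable v0 : ket F n.
Hypotheses (v0Q : inQ p C lam v0) (v0_neq0 : v0 != 0).

Lemma lam_EvecM c c' : c \in C -> c' \in C ->
  lam (E c) * lam (E c') = omega p c c' * lam (E (c + c')).
Proof.
move=> cC c'C; apply: (scalev_inj v0_neq0).
rewrite mulrC -[in LHS]scalerA -(inQ_Evec v0Q cC) scalemxAr -(inQ_Evec v0Q c'C) mulmxA.
by rewrite (EvecM pr_p chF) -scalemxAl (inQ_Evec v0Q (memvD cC c'C)) scalerA.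
Qed.

Lemma lam_Evec0 : lam (E 0) = 1.
Proof.
apply: (scalev_inj v0_neq0); rewrite -(inQ_Evec v0Q (mem0v C)) scale1r.
by rewrite (Evec0 n pr_p chF) mul1mx.
Qed.

Lemma syndrome_phaseM e c c' : c \in C -> c' \in C ->
  mu e c * mu e c' = omega p c c' * mu e (c + c').
Proof.
move=> cC c'C; rewrite /mu sformDr (xi_trD pr_p chF) mulrACA lam_EvecM //.
by rewrite -mulrA.
Qed.

Lemma syndrome_phaseN e c : c \in C -> mu e (- c) = omega p (- c) c * (mu e c)^*.
Proof.
move=> cC; have NcC : - c \in C by rewrite memvN.
have := lam_EvecM NcC cC; rewrite addNr lam_Evec0 mulr1 => lamN.
rewrite /mu sformNr (xi_trN pr_p chF) rmorphM mulrA.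
congr (_ * _); rewrite -lamN -mulrA (mulrC (lam (E c))).
by rewrite (lam_Evec_conjK v0Q v0_neq0 cC) mulr1.
Qed.

Lemma syndrome_proj_hadj e : adj (P e) = P e.
Proof.
rewrite /P hadjZ hadj_sum fmorphV rmorph_nat; congr (_ *: _).
under eq_bigr => c _ do rewrite hadjZ conjCK (hadjEvec pr_p chF) scalerA.
rewrite -(sum_subcode_opp C J (fun c => (mu e c * (omega p c (- c))^*) *: E (- c))).
apply: eq_bigr => c /subcode_sub cC; rewrite opprK syndrome_phaseN //; congr (_ *: _).
by rewrite mulrAC [omega _ _ _ * _]mulrC (omegaK pr_p) mul1r.
Qed.

Lemma syndrome_proj_mul e e' : supp_in I e -> supp_in I e' ->
  P e *m P e' = (e == e')%:R *: P e.
Proof.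
move=> eI e'I.
have term c c' : c \in CJ -> c' \in CJ ->
    ((mu e c)^* *: E c) *m ((mu e' c')^* *: E c') =
    chi (sform (e - e') c') *: ((mu e (c' + c))^* *: E (c' + c)).
  move=> /subcode_sub cC /subcode_sub c'C.
  rewrite -scalemxAl -scalemxAr (EvecM pr_p chF) !scalerA [c + c']addrC; congr (_ *: _).
  have conjM : (mu e c)^* * (mu e c')^* = (omega p c c')^* * (mu e (c' + c))^*.
    by rewrite -!rmorphM syndrome_phaseM // addrC.
  rewrite (syndrome_phase_shift e e' c') mulrA conjM.
  rewrite -[RHS]mul1r -(omegaK pr_p c c'); ring.
rewrite /P -scalemxAl -scalemxAr scalerA mulmx_suml.
under eq_bigr => c _ do rewrite mulmx_sumr.
under eq_bigr => c cCJ do under eq_bigr => c' c'CJ do rewrite term //.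
rewrite exchange_big /=.
under eq_bigr => c' c'CJ do
  rewrite -scaler_sumr (sum_subcode_shift (fun c => (mu e c)^* *: E c) c'CJ).
rewrite -scaler_suml sum_subcode_xi_tr ?supp_inD ?supp_inN // subr_eq0 !scalerA.
by congr (_ *: _); field; apply: card_subcode_neq0.
Qed.

End NontrivialCode.

End Syndromes.

(** * The depolarizing channel *)

Section Depolarizing.
Variables (F : finFieldType) (p n : nat).
Hypotheses (pr_p : prime p) (chF : p \in [pchar F]).
Local Notation vec := 'rV[F]_(n + n).
Local Notation E := (@Evec F p n).
Implicit Types (rho : op F n) (W : vec -> algC) (e u : vec).

Definition Evec_conj rho e := E e *m rho *m adj (E e).

Definition unit_vec (i : 'I_n) (a b : F) : vec := a *: ua i + b *: ub i.

Lemma Eop_unit_at i a b : Eop p (unit_at i a) (unit_at i b) = E (unit_vec i a b).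
Proof.
apply: eq_Eop => j; rewrite /unit_vec ?apartD ?bpartD ?apartZ ?bpartZ;
rewrite ?apart_ua ?bpart_ua ?apart_ub ?bpart_ub /unit_at;
by case: (j == i); rewrite ?mulr1 ?mulr0 ?addr0 ?add0r.
Qed.

Lemma supp_in_unit_vec (S : {set 'I_n}) i a b : i \in S -> supp_in S (unit_vec i a b).
Proof. by move=> iS; rewrite supp_inD ?supp_inZ ?supp_in_ua ?supp_in_ub. Qed.

Lemma Evec_conj_shift rho u e : E u *m Evec_conj rho e *m adj (E u) = Evec_conj rho (u + e).
Proof.
rewrite /Evec_conj !mulmxA -[E u *m E e *m rho *m adj (E e) *m adj (E u)]mulmxA -hadjM.
rewrite (EvecM pr_p chF) hadjZ -scalemxAl -scalemxAl -scalemxAr scalerA mulrC.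
by rewrite (omegaK pr_p) scale1r.
Qed.

Definition smear i W e := (#|F| ^ 2)%:R^-1 * \sum_(a : F) \sum_(b : F) W (e - unit_vec i a b).

Lemma gamma_at_mixture i W rho :
  gamma_at p i (\sum_e W e *: Evec_conj rho e) = \sum_e smear i W e *: Evec_conj rho e.
Proof.
rewrite /gamma_at /smear.
transitivity ((#|F| ^ 2)%:R^-1 *:
    \sum_(a : F) \sum_(b : F) \sum_e W e *: Evec_conj rho (unit_vec i a b + e)).
  congr (_ *: _); apply: eq_bigr => a _; apply: eq_bigr => b _.
  rewrite Eop_unit_at mulmx_sumr mulmx_suml; apply: eq_bigr => e _.
  by rewrite -scalemxAr -scalemxAl Evec_conj_shift.
under [RHS]eq_bigr => e _ do rewrite -scalerA scaler_suml.
rewrite -scaler_sumr [in RHS]exchange_big /=; congr (_ *: _); apply: eq_bigr => a _.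
under [RHS]eq_bigr => e _ do rewrite scaler_suml.
rewrite [in RHS]exchange_big /=; apply: eq_bigr => b _.
rewrite [RHS](reindex_inj (addIr (unit_vec i a b))) /=.
by apply: eq_bigr => e _; rewrite addrK addrC.
Qed.

Lemma sum_smear i W : \sum_e smear i W e = \sum_e W e.
Proof.
rewrite -mulr_sumr exchange_big /=; under eq_bigr => a _ do rewrite exchange_big /=.
transitivity ((#|F| ^ 2)%:R^-1 * \sum_(a : F) \sum_(b : F) \sum_e W e).
  congr (_ * _); apply: eq_bigr => a _; apply: eq_bigr => b _.
  by rewrite (reindex_inj (addIr (unit_vec i a b))) /=; apply: eq_bigr => e _; rewrite addrK.
rewrite !sumr_const -mulrnA -[X in _ * X]mulr_natl mulrA [(_ * _)%N]mulnn mulVf ?mul1r //.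
by rewrite pnatr_eq0 expn_eq0 andbT -lt0n; apply/card_gt0P; exists 0.
Qed.

Lemma gammaI_mixture (I : {set 'I_n}) rho :
  exists W, [/\ forall e, W e != 0 -> supp_in I e, \sum_e W e = 1
             & gammaI p I rho = \sum_e W e *: Evec_conj rho e].
Proof.
rewrite /gammaI; have : all (mem I) (enum I) by apply/allP => i; rewrite mem_enum.
elim: (enum I) => [_|i l IH /= /andP [iI /IH [W [WI W1 ->]]]].
  exists (fun e => (e == 0)%:R); split.
  - by move=> e; have [->|] := eqVneq e 0; [rewrite supp_in0 | rewrite eqxx].
  - by rewrite (bigD1 0) //= eqxx big1 ?addr0 // => e /negbTE ->.
  - rewrite (bigD1 0) //= eqxx big1 ?addr0 => [|e /negbTE ->]; last by rewrite scale0r.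
    by rewrite scale1r /Evec_conj (Evec0 n pr_p chF) hadj1 mul1mx mulmx1.
exists (smear i W); split; rewrite ?sum_smear ?gamma_at_mixture // => e.
apply: contraR => eI; rewrite /smear big1 ?mulr0 // => a _; rewrite big1 // => b _.
apply/eqP; apply: contraR eI => /WI eu; rewrite -(subrK (unit_vec i a b) e).
by rewrite supp_inD ?supp_in_unit_vec.
Qed.

Lemma gammaI0 (I : {set 'I_n}) : gammaI p I (0 : op F n) = 0.
Proof.
rewrite /gammaI; elim: (enum I) => //= i l ->.
by rewrite /gamma_at big1 ?scaler0 // => a _; rewrite big1 // => b _; rewrite mulmx0 mul0mx.
Qed.

End Depolarizing.

(** * Recovery *)

Lemma sum_delta (T : eqType) (R : pzRingType) (V : lmodType R) (s : seq T) x (X : V) :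
  uniq s -> x \in s -> \sum_(y <- s) (y == x)%:R *: X = X.
Proof.
move=> s_uniq xs; rewrite (bigD1_seq x) //= eqxx scale1r big1 ?addr0 // => y /negbTE ->.
by rewrite scale0r.
Qed.

Section Recovery.
Variables (F : finFieldType) (p n : nat).
Hypotheses (pr_p : prime p) (chF : p \in [pchar F]).
Local Notation vec := 'rV[F]_(n + n).
Local Notation E := (@Evec F p n).
Variables (C : {vspace vec}) (lam : op F n -> algC) (I J : {set 'I_n}).
Hypotheses (IJ : I \subset J)
  (dual_wt : forall w, w \in sdual C -> w != 0 -> (#|I :|: ~: J| < swtv w)%N).
Local Notation P := (syndrome_proj p C lam J).

Definition errors_on : seq vec := [seq e <- enum vec | supp_in I e].

Lemma mem_errors_on e : (e \in errors_on) = supp_in I e.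
Proof. by rewrite mem_filter mem_enum andbT. Qed.

Lemma errors_on_uniq : uniq errors_on.
Proof. by rewrite filter_uniq ?enum_uniq. Qed.

Definition syndrome_proj_sum : op F n := \sum_(e <- errors_on) P e.

Definition recovery : seq (op F n) :=
  [seq adj (E e) *m P e | e <- errors_on] ++ [:: 1%:M - syndrome_proj_sum].

Lemma apply_op_mixture (T : finType) (Ks : seq (op F n)) (W : T -> algC) (X : T -> op F n) :
  apply_op Ks (\sum_t W t *: X t) = \sum_t W t *: apply_op Ks (X t).
Proof.
rewrite /apply_op; under eq_bigr => K _ do rewrite mulmx_sumr mulmx_suml.
rewrite exchange_big /=; apply: eq_bigr => t _; rewrite scaler_sumr.
by apply: eq_bigr => K _; rewrite -scalemxAr -scalemxAl.
Qed.

Lemma recovery_local K : K \in recovery -> local_op J K.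
Proof.
rewrite mem_cat mem_seq1 => /orP [/mapP [e + ->]|/eqP ->].
  rewrite mem_errors_on => eI; apply: local_opM; last exact: local_op_syndrome_proj.
  exact/local_op_adj/local_op_Evec/(supp_inS IJ).
by apply/local_opB/local_op_sum => [|e _]; [apply: local_op1 | apply: local_op_syndrome_proj].
Qed.

Lemma recovery_Evec_conj v e : inQ p C lam v -> supp_in I e ->
  apply_op recovery (Evec_conj p (v *m adj v) e) = v *m adj v.
Proof.
move=> vQ eI; set w := E e *m v.
have conj_w K : K *m Evec_conj p (v *m adj v) e *m adj K = (K *m w) *m adj (K *m w).
  by rewrite /Evec_conj /w !hadjM !mulmxA.
have P_w e' : e' \in errors_on -> P e' *m w = (e' == e)%:R *: w.
  by rewrite mem_errors_on => e'I; apply: (syndrome_proj_Evec pr_p chF IJ dual_wt).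
rewrite /apply_op big_cat big_seq1 big_map /= !conj_w.
have -> : (1%:M - syndrome_proj_sum) *m w = 0.
  rewrite mulmxBl mul1mx /syndrome_proj_sum mulmx_suml (eq_big_seq _ P_w).
  by rewrite sum_delta ?errors_on_uniq ?mem_errors_on // subrr.
rewrite mul0mx addr0.
rewrite -[RHS](sum_delta _ errors_on_uniq (_ : e \in _)) ?mem_errors_on //.
apply: eq_big_seq => e' e'I; rewrite conj_w -[_ *m P e' *m w]mulmxA P_w //.
have [->|_] := eqVneq e' e; last by rewrite !scale0r mulmx0 mul0mx.
by rewrite !scale1r /w mulmxA (Evec_unitary_l pr_p) mul1mx.
Qed.

Lemma recovery_corrects v : inQ p C lam v ->
  apply_op recovery (gammaI p I (v *m adj v)) = v *m adj v.
Proof.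
move=> vQ; have [W [WI W1 ->]] := gammaI_mixture pr_p chF I (v *m adj v).
rewrite apply_op_mixture -[RHS]scale1r -W1 scaler_suml; apply: eq_bigr => e _.
have [->|/WI eI] := eqVneq (W e) 0; first by rewrite !scale0r.
by rewrite recovery_Evec_conj.
Qed.

Section NontrivialCode.
Variable v0 : ket F n.
Hypotheses (v0Q : inQ p C lam v0) (v0_neq0 : v0 != 0).

Lemma syndrome_proj_sum_hadj : adj syndrome_proj_sum = syndrome_proj_sum.
Proof.
by rewrite hadj_sum; apply: eq_bigr => e _; rewrite (syndrome_proj_hadj pr_p chF J v0Q v0_neq0).
Qed.

Lemma syndrome_proj_sum_idem : syndrome_proj_sum *m syndrome_proj_sum = syndrome_proj_sum.
Proof.
rewrite {1}/syndrome_proj_sum mulmx_suml; apply: eq_big_seq => e eI.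
rewrite /syndrome_proj_sum mulmx_sumr -[RHS](sum_delta _ errors_on_uniq eI).
apply: eq_big_seq => e'; rewrite !mem_errors_on in eI * => e'I.
by rewrite (syndrome_proj_mul pr_p chF IJ dual_wt v0Q v0_neq0) // eq_sym.
Qed.

Lemma recovery_trace_preserving : \sum_(K <- recovery) (adj K *m K) = 1%:M.
Proof.
rewrite big_cat big_map big_seq1 /=.
have -> : \sum_(e <- errors_on) adj (adj (E e) *m P e) *m (adj (E e) *m P e) =
    syndrome_proj_sum.
  apply: eq_big_seq => e; rewrite mem_errors_on => eI.
  rewrite hadjM hadjK (syndrome_proj_hadj pr_p chF J v0Q v0_neq0) mulmxA -(mulmxA (P e)).
  rewrite (Evec_unitary_r pr_p) mulmx1.
  by rewrite (syndrome_proj_mul pr_p chF IJ dual_wt v0Q v0_neq0) // eqxx scale1r.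
rewrite hadjB hadj1 syndrome_proj_sum_hadj mulmxBl mul1mx mulmxBr mulmx1.
by rewrite syndrome_proj_sum_idem subrr subr0 addrC subrK.
Qed.

Lemma recovery_tp_op_on : tp_op_on J recovery.
Proof.
split; last exact: recovery_trace_preserving.
by move=> K /recovery_local/local_op_acts_only_on.
Qed.

End NontrivialCode.

End Recovery.

Lemma locally_recoverable_trivial (F : finFieldType) (p n : nat)
    (C : {vspace 'rV[F]_(n + n)}) (lam : op F n -> algC) (I J : {set 'I_n}) :
  (forall v, inQ p C lam v -> v = 0) -> locally_recoverable p C lam I J.
Proof.
move=> Q0; exists [:: 1%:M]; split.
  split; last by rewrite big_seq1 hadj1 mul1mx.
  by move=> K; rewrite mem_seq1 => /eqP ->; apply/local_op_acts_only_on/local_op1.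
by move=> v /Q0 ->; rewrite mul0mx gammaI0 /apply_op big_seq1 mulmx0 mul0mx.
Qed.

Theorem proposition20 (F : finFieldType) (p n : nat)
  (C : {vspace 'rV[F]_(n + n)}) (lam : op F n -> algC) (I J : {set 'I_n}) :
  prime p -> p \in [pchar F] ->
  symp_self_orth C ->
  stab_char p C lam ->
  I != set0 -> I \proper J ->
  (n - swt (sdual C) + #|I| + 1 <= #|J|)%N ->
  locally_recoverable p C lam I J.
Proof.
move=> pr_p chF _ _ _ /proper_sub IJ /swtv_gt_of_swt dual_wt.
have [[v0 [v0Q v0_neq0]]|Q0] := classic (exists v0, inQ p C lam v0 /\ v0 != 0).
  exists (recovery p C lam I J); split; first exact: recovery_tp_op_on v0Q v0_neq0.
  exact: recovery_corrects.
apply: locally_recoverable_trivial => v vQ; apply/eqP/negPn/negP => v_neq0.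
by apply: Q0; exists v.
Qed.
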